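(* Under the standing setup, for all $t\ge0$ and $u_0\in\mathbb R^d$, $\mathscr S(t)u_0=\sup_{\pi\in P_t}\mathcal E_\pi u_0=\sup_{\theta\in Q_t}S_\theta u_0.$
   Context: Standing setup: $d\in\mathbb N$; vectors in $\mathbb R^d$; inequalities and suprema of vectors are componentwise; reals are identified with constant vectors. A $Q$-matrix is $q\in\mathbb R^{d\times d}$ with $q_{ii}\le0$, $q_{ij}\ge0$ ($i\ne j$), $\sum_jq_{ij}=0$. Let $\mathcal P$ be a set of $Q$-matrices and $f=(f_q)_{q\in\mathcal P}\subset\mathbb R^d$ with $\sup_{q\in\mathcal P}f_q=f_{q_0}=0$ for some $q_0\in\mathcal P$, such that $\mathcal Qu:=\sup_{q\in\mathcal P}(qu+f_q)$ is finite for every $u\in\mathbb R^d$. For $q\in\mathcal P$, $t\ge0$: $S_q(t)u_0:=e^{tq}u_0+\int_0^te^{sq}f_q\,ds$. For $h\ge0$: $\mathcal E_hu_0:=\sup_{q\in\mathcal P}S_q(h)u_0$. $P$ is the set of finite subsets $\pi\subset[0,\infty)$ with $0\in\pi$; $P_t:=\{\pi\in P:\max\pi=t\}$. For $\pi=\{t_0,\dots,t_m\}$ with $0=t_0<\dots<t_m$, $m\ge1$, $\mathcal E_\pi:=\mathcal E_{t_1-t_0}\circ\cdots\circ\mathcal E_{t_m-t_{m-1}}$, and $\mathcal E_{\{0\}}:=\mathcal E_0$. The Nisio semigroup of $(\mathcal P,f)$ is $\mathscr S(t)u_0:=\sup_{\pi\in P_t}\mathcal E_\pi u_0$. For $\mathbf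 q=(q^1,\dots,q^d)\in\mathcal P^d$ and $t\ge0$, define the affine map $S_{\mathbf q}(t)\colon\mathbb R^d\to\mathbb R^d$ by $(S_{\mathbf q}(t)u_0)_i:=(S_{q^i}(t)u_0)_i$ for $i=1,\dots,d$. Let $Q_t:=\{(\mathbf q_k,h_k)_{k=1,\dots,m}\in(\mathcal P^d\times[0,t])^m : m\in\mathbb N,\ \sum_{k=1}^mh_k=t\}$, and for $\theta=(\mathbf q_k,h_k)_{k=1,\dots,m}\in Q_t$ set $S_\theta u_0:=S_{\mathbf q_1}(h_1)\circ\cdots\circ S_{\mathbf q_m}(h_m)u_0$. *)

From Stdlib Require Import Reals ClassicalEpsilon.
From mathcomp Require Import ssreflect ssrfun ssrbool eqtype ssrnat fintype bigop.
Open Scope R_scope.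

Definition vec (d : nat) := 'I_d -> R.
Definition mat (d : nat) := 'I_d -> 'I_d -> R.

Definition mulmv {d : nat} (q : mat d) (v : vec d) : vec d :=
  fun i => \big[Rplus/0]_(j < d) (q i j * v j).

Fixpoint matpowv {d : nat} (q : mat d) (n : nat) (v : vec d) : vec d :=
  match n with
  | O => v
  | S n' => mulmv q (matpowv q n' v)
  end.

Definition is_Qmatrix {d : nat} (q : mat d) : Prop :=
  (forall i, q i i <= 0) /\
  (forall i j, i <> j -> 0 <= q i j) /\
  (forall i, \big[Rplus/0]_(j < d) q i j = 0).

(* limit of a real sequence (chosen by epsilon; the true limit whenever it exists) *)
Definition lim_seq (u : nat -> R) : R := epsilon (inhabits 0) (fun l => Un_cv u l).

Definition expmv {d : nat} (t : R) (q : mat d) (v : vec d) : vec d :=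
  fun i => lim_seq (fun N => sum_f_R0 (fun n => t ^ n / INR (Factorial.fact n) * matpowv q n v i) N).

(* Riemann integral int_a^b g (the true one whenever g is Riemann integrable) *)
Definition Rint (g : R -> R) (a b : R) : R :=
  epsilon (inhabits 0) (fun I => exists pr : Riemann_integrable g a b, RiemannInt pr = I).

Definition Sq {d : nat} (f : mat d -> vec d) (q : mat d) (t : R) (u0 : vec d) : vec d :=
  fun i => expmv t q u0 i + Rint (fun s => expmv s q (f q) i) 0 t.

(* supremum of a set of reals (the least upper bound whenever it exists) *)
Definition supR (E : R -> Prop) : R := epsilon (inhabits 0) (is_lub E).

Definition Eh {d : nat} (P : mat d -> Prop) (f : mat d -> vec d) (h : R) (u0 : vec d) : vec d :=
  fun i => supR (fun x => exists q, P q /\ x = Sq f q h u0 i).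

(* A partition pi = {0 = t0 < t1 < ... < tm} is encoded by the list [t1; ...; tm].
   incr_from a ts t : a < t1 < ... < tm and tm = t (or ts = [] and a = t). *)
Fixpoint incr_from (a : R) (ts : list R) (t : R) : Prop :=
  match ts with
  | nil => a = t
  | cons x r => a < x /\ incr_from x r t
  end.

Definition in_Pt (t : R) (ts : list R) : Prop := incr_from 0 ts t.

Fixpoint Epi_aux {d : nat} (P : mat d -> Prop) (f : mat d -> vec d)
    (a : R) (ts : list R) (u0 : vec d) : vec d :=
  match ts with
  | nil => u0
  | cons x r => Eh P f (x - a) (Epi_aux P f x r u0)
  end.

Definition Epi {d : nat} (P : mat d -> Prop) (f : mat d -> vec d)
    (ts : list R) (u0 : vec d) : vec d :=
  match ts with
  | nil => Eh P f 0 u0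
  | _ => Epi_aux P f 0 ts u0
  end.

Definition nisio {d : nat} (P : mat d -> Prop) (f : mat d -> vec d)
    (t : R) (u0 : vec d) : vec d :=
  fun i => supR (fun x => exists ts, in_Pt t ts /\ x = Epi P f ts u0 i).

Definition Sbold {d : nat} (f : mat d -> vec d) (qs : 'I_d -> mat d) (t : R)
    (u0 : vec d) : vec d :=
  fun i => Sq f (qs i) t u0 i.

(* theta = (bold q_k, h_k)_{k=1..m} as a list; S_theta = S_{q1}(h1) o ... o S_{qm}(hm) *)
Fixpoint Stheta {d : nat} (f : mat d -> vec d) (th : list (('I_d -> mat d) * R))
    (u0 : vec d) : vec d :=
  match th with
  | nil => u0
  | cons (qs, h) r => Sbold f qs h (Stheta f r u0)
  end.

Fixpoint sum_h {d : nat} (th : list (('I_d -> mat d) * R)) : R :=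
  match th with
  | nil => 0
  | cons (_, h) r => h + sum_h r
  end.

Fixpoint all_in {d : nat} (P : mat d -> Prop) (t : R) (th : list (('I_d -> mat d) * R)) : Prop :=
  match th with
  | nil => True
  | cons (qs, h) r => (forall i, P (qs i)) /\ 0 <= h <= t /\ all_in P t r
  end.

Definition in_Qt {d : nat} (P : mat d -> Prop) (t : R) (th : list (('I_d -> mat d) * R)) : Prop :=
  th <> nil /\ all_in P t th /\ sum_h th = t.

From HB Require Import structures.
From Stdlib Require Import Reals ClassicalEpsilon Lra FunctionalExtensionality.
From Coquelicot Require Import Coquelicot.
From mathcomp Require Import ssreflect ssrfun ssrbool eqtype ssrnat fintype bigop binomial.
Open Scope R_scope.

(* Each [S_q(h)] is monotone, commutes with adding constants, and (as [f_q <= 0])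
   satisfies [S_q(h) u <= c] whenever [u <= c].  Monotonicity is positivity of
   [e^{tq}]: with [K] the sum of the |q_ij|, [B := q + K I] is entrywise nonnegative
   and [e^{tq} = e^{-Kt} e^{tB}].
   Given [theta], merging the steps into the partition of cumulative step lengths
   (zero steps act as the identity) gives [S_theta u0 <= E_pi u0], since at each step
   and each coordinate [S_{q^i}(h)] is below [E_h].  Conversely, given [pi] and [e > 0],
   choosing at each step and each coordinate a [q^i] that is [e/2]-optimal yields
   [theta] with [S_theta u0 >= E_pi u0 - e]: by monotonicity and translation
   invariance the errors of later steps pass through earlier ones unamplified. *)

HB.instance Definition _ := Monoid.isComLaw.Build R 0 Rplus
  (fun a b c => esym (Rplus_assoc a b c)) Rplus_comm Rplus_0_l.

Section RealSums.
Variables (I : Type) (r : list I) (Pr : pred I).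

Lemma sumR_scal (c : R) (F : I -> R) :
  \big[Rplus/0]_(j <- r | Pr j) (c * F j) = c * \big[Rplus/0]_(j <- r | Pr j) F j.
Proof. by elim/big_rec2: _ => [|j y1 y2 _ ->]; ring. Qed.

Lemma sumR_le (F G : I -> R) : (forall j, F j <= G j) ->
  \big[Rplus/0]_(j <- r | Pr j) F j <= \big[Rplus/0]_(j <- r | Pr j) G j.
Proof. by move=> H; elim/big_ind2: _ => // *; lra. Qed.

Lemma sumR_ge0 (F : I -> R) : (forall j, 0 <= F j) -> 0 <= \big[Rplus/0]_(j <- r | Pr j) F j.
Proof. by move=> H; elim/big_ind: _ => // *; lra. Qed.

Lemma sumR_abs (F : I -> R) :
  Rabs (\big[Rplus/0]_(j <- r | Pr j) F j) <= \big[Rplus/0]_(j <- r | Pr j) Rabs (F j).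
Proof.
elim/big_rec2: _ => [|j y1 y2 _ H]; first by rewrite Rabs_R0; lra.
by apply: Rle_trans (Rabs_triang _ _) _; lra.
Qed.

End RealSums.

Lemma sumR_ge_term {d : nat} (F : 'I_d -> R) i : (forall j, 0 <= F j) ->
  F i <= \big[Rplus/0]_(j < d) F j.
Proof.
move=> H; rewrite (bigD1 i) //= -{1}[F i]Rplus_0_r.
by apply: Rplus_le_compat_l; apply: sumR_ge0.
Qed.

(* The inductive step of [(T + a)^n x = sum_k C(n,k) a^(n-k) T^k x] for the shift
   [(T x)_k = x_(k+1)], i.e. Pascal's rule. *)
Lemma binomial_step (a : R) (x : nat -> R) n :
  \big[Rplus/0]_(k < n.+1) (INR 'C(n, k) * a ^ (n - k) * (x k.+1 + a * x k)) =
  \big[Rplus/0]_(k < n.+2) (INR 'C(n.+1, k) * a ^ (n.+1 - k) * x k).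
Proof.
set A := \big[Rplus/0]_(k < n.+1) (INR 'C(n, k.+1) * a ^ (n - k) * x k.+1).
set B := \big[Rplus/0]_(k < n.+1) (INR 'C(n, k) * a ^ (n - k) * x k.+1).
have lower : \big[Rplus/0]_(k < n.+1) (INR 'C(n, k) * a ^ (n - k) * (a * x k)) =
             a ^ n.+1 * x 0%N + A.
  rewrite big_ord_recl /A big_ord_recr /= bin0 subn0 bin_small // Rmult_0_l Rmult_0_l Rplus_0_r.
  congr (_ + _); first by change (INR 1) with 1; ring.
  by apply: eq_bigr => k _; rewrite /bump /= ?add1n -(subnSK (ltn_ord k)) /=; ring.
have upper : \big[Rplus/0]_(k < n.+2) (INR 'C(n.+1, k) * a ^ (n.+1 - k) * x k) =
             a ^ n.+1 * x 0%N + A + B.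
  rewrite big_ord_recl /A /B Rplus_assoc -big_split /= ?bin0 ?subn0.
  congr (_ + _); first ring.
  by apply: eq_bigr => k _; rewrite /bump /= ?add1n binS -plusE plus_INR subSS; ring.
rewrite upper -lower /B -big_split /=.
by apply: eq_bigr => k _; ring.
Qed.

Section Vectors.
Context {d : nat}.
Implicit Types (q B : mat d) (u v w : vec d).

Definition nrm v := \big[Rplus/0]_(j < d) Rabs (v j).

Definition matnorm q := \big[Rplus/0]_(i < d) \big[Rplus/0]_(j < d) Rabs (q i j).

Lemma matnorm_ge0 q : 0 <= matnorm q.
Proof. by apply: sumR_ge0 => i; apply: sumR_ge0 => j; apply: Rabs_pos. Qed.

Lemma abs_le_nrm v i : Rabs (v i) <= nrm v.
Proof. by apply: (sumR_ge_term (fun j => Rabs (v j))) => j; apply: Rabs_pos. Qed.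

Lemma le_nrm v i : v i <= nrm v.
Proof. exact: Rle_trans (Rle_abs _) (abs_le_nrm v i). Qed.

Lemma nrm_mulmv q v : nrm (mulmv q v) <= matnorm q * nrm v.
Proof.
rewrite /matnorm [_ * nrm v]Rmult_comm -sumR_scal; apply: sumR_le => i.
apply: Rle_trans (sumR_abs _ _ _ _) _.
rewrite -sumR_scal; apply: sumR_le => j.
rewrite Rabs_mult (Rmult_comm (nrm v)).
by apply: Rmult_le_compat_l; [apply: Rabs_pos | apply: abs_le_nrm].
Qed.

Lemma matpowv_abs_le q n v i : Rabs (matpowv q n v i) <= matnorm q ^ n * nrm v.
Proof.
apply: Rle_trans (abs_le_nrm _ i) _.
elim: n => [|n IH] /=; first lra.
apply: Rle_trans (nrm_mulmv _ _) _; rewrite Rmult_assoc.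
exact: Rmult_le_compat_l (matnorm_ge0 q) IH.
Qed.

Lemma mulmv_lin q a b u v i :
  mulmv q (fun j => a * u j + b * v j) i = a * mulmv q u i + b * mulmv q v i.
Proof.
rewrite /mulmv (eq_bigr (fun j => a * (q i j * u j) + b * (q i j * v j))).
  by rewrite big_split !sumR_scal.
by move=> j _; ring.
Qed.

Lemma matpowv_lin q n a b u v i :
  matpowv q n (fun j => a * u j + b * v j) i = a * matpowv q n u i + b * matpowv q n v i.
Proof.
elim: n i => [|n IH] i //=.
by rewrite -mulmv_lin; apply: eq_bigr => j _; rewrite IH.
Qed.

Lemma matpowv_const q n c i : is_Qmatrix q ->
  matpowv q n (fun _ => c) i = if n is O then c else 0.
Proof.
move=> [_ [_ rows0]]; elim: n i => [|n IH] i //=.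
rewrite /mulmv (eq_bigr (fun j => (if n is O then c else 0) * q i j)); last first.
  by move=> j _; rewrite IH; ring.
by rewrite sumR_scal rows0 Rmult_0_r.
Qed.

Lemma matpowv_ge0 B n w i : (forall i j, 0 <= B i j) -> (forall j, 0 <= w j) ->
  0 <= matpowv B n w i.
Proof.
move=> HB Hw; elim: n i => [|n IH] i //=.
by apply: sumR_ge0 => k; apply: Rmult_le_pos.
Qed.

Definition qshift q : mat d := fun i j => q i j + (if i == j then matnorm q else 0).

Lemma mulmv_qshift q v i : mulmv (qshift q) v i = mulmv q v i + matnorm q * v i.
Proof.
rewrite /mulmv /qshift.
rewrite (eq_bigr (fun j => q i j * v j + (if i == j then matnorm q else 0) * v j));
  last by move=> j _; ring.
rewrite big_split; congr (_ + _).
rewrite (bigD1 i) //= eqxx big1 ?Rplus_0_r // => j ji.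
by rewrite eq_sym (negbTE ji); ring.
Qed.

Lemma qshift_ge0 q i j : is_Qmatrix q -> 0 <= qshift q i j.
Proof.
move=> [diag_le0 [offdiag_ge0 _]]; rewrite /qshift.
case: eqP => [<-|ij]; last by have := offdiag_ge0 i j ij; lra.
have : Rabs (q i i) <= matnorm q.
  apply: Rle_trans (sumR_ge_term (fun j => Rabs (q i j)) i _) _; first by move=> ?; apply: Rabs_pos.
  apply: (sumR_ge_term (fun i => \big[Rplus/0]_(j < d) Rabs (q i j))) => k.
  by apply: sumR_ge0 => ?; apply: Rabs_pos.
by rewrite Rabs_left1; [lra | apply: diag_le0].
Qed.

Lemma matpowv_binomial q n w i :
  matpowv q n w i =
  \big[Rplus/0]_(k < n.+1) (INR 'C(n, k) * (- matnorm q) ^ (n - k) * matpowv (qshift q) k w i).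
Proof.
elim: n i => [|n IH] i; first by rewrite big_ord1 /=; ring.
rewrite -(binomial_step _ (fun k => matpowv (qshift q) k w i)).
rewrite [LHS]/= /mulmv; under eq_bigr => j _ do rewrite (IH j) -sumR_scal.
rewrite exchange_big /=; apply: eq_bigr => k _.
transitivity (INR 'C(n, k) * (- matnorm q) ^ (n - k) * mulmv q (matpowv (qshift q) k w) i).
  by rewrite /mulmv -sumR_scal; apply: eq_bigr => j _; ring.
by rewrite mulmv_qshift; ring.
Qed.

End Vectors.

Lemma fact_factorial n : Factorial.fact n = n`!.
Proof. by elim: n => // n IH; rewrite factS -IH. Qed.

Lemma INR_fact_neq0 n : INR (Factorial.fact n) <> 0.
Proof. by apply: not_0_INR; rewrite fact_factorial; apply/eqP; rewrite -lt0n fact_gt0. Qed.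

Lemma INR_fact_gt0 n : 0 < INR (Factorial.fact n).
Proof. exact: lt_0_INR (Factorial.lt_O_fact n). Qed.

Lemma sum_f_R0_big (F : nat -> R) n : sum_f_R0 F n = \big[Rplus/0]_(k < n.+1) F k.
Proof.
elim: n => [|n IH]; first by rewrite big_ord1.
by rewrite tech5 IH [RHS]big_ord_recr.
Qed.

Lemma lim_seq_eq (u : nat -> R) l : Un_cv u l -> lim_seq u = l.
Proof.
move=> ul; apply: (UL_sequence u _ _ _ ul).
by apply: (epsilon_spec (inhabits 0) (Un_cv u)); exists l.
Qed.

Lemma is_series_ge0 (a : nat -> R) l : (forall n, 0 <= a n) -> is_series a l -> 0 <= l.
Proof.
move=> a_ge0 al.
have sums_cv : Un_cv (sum_f_R0 a) l by apply is_series_Reals.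
apply: (Rle_cv_lim (Un := fun _ => 0)) sums_cv => [n|e e_gt0].
  exact: cond_pos_sum.
by exists O => n _; rewrite /R_dist Rminus_diag Rabs_R0.
Qed.

Lemma is_series_exp_coef (x : R) : is_series (fun n => x ^ n / INR (Factorial.fact n)) (exp x).
Proof.
apply: is_series_ext (is_exp_Reals x) => n.
by rewrite pow_n_pow /scal /= /mult /= /Rdiv Rmult_comm.
Qed.

Section MatrixExponential.
Context {d : nat}.
Implicit Types (q : mat d) (u v w : vec d).

Definition exp_term t q v i n := t ^ n / INR (Factorial.fact n) * matpowv q n v i.

Lemma ex_series_abs_exp_term t q v i : ex_series (fun n => Rabs (exp_term t q v i n)).
Proof.
apply: (ex_series_le _ (fun n => (Rabs t * matnorm q) ^ n / INR (Factorial.fact n) * nrm v)).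
  move=> n; rewrite /norm /= /abs /= Rabs_Rabsolu /exp_term !Rabs_mult Rabs_inv.
  rewrite -RPow_abs Rpow_mult_distr (Rabs_pos_eq (INR _)) /Rdiv; last exact: pos_INR.
  have coef_ge0 : 0 <= Rabs t ^ n * / INR (Factorial.fact n).
    apply: Rmult_le_pos; first by apply: pow_le; apply: Rabs_pos.
    exact/Rlt_le/Rinv_0_lt_compat/INR_fact_gt0.
  have := Rmult_le_compat_l _ _ _ coef_ge0 (matpowv_abs_le q n v i); lra.
by apply: ex_series_scal_r; eexists; apply: is_series_exp_coef.
Qed.

Lemma expmv_is_series t q v i : is_series (exp_term t q v i) (expmv t q v i).
Proof.
have [l tl] := ex_series_Rabs _ (ex_series_abs_exp_term t q v i).
by rewrite /expmv (lim_seq_eq _ l) //; apply/is_series_Reals.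
Qed.

Lemma expmv_of_series t q v i l : is_series (exp_term t q v i) l -> expmv t q v i = l.
Proof. by move=> tl; apply is_series_Reals in tl; rewrite /expmv (lim_seq_eq _ _ tl). Qed.

Lemma expmv_of_partial_sums t q v i c :
  (forall N, sum_f_R0 (exp_term t q v i) N = c) -> expmv t q v i = c.
Proof.
move=> sums; rewrite /expmv (lim_seq_eq _ c) // => e e_gt0.
by exists O => n _; rewrite sums /R_dist Rminus_diag Rabs_R0.
Qed.

Lemma expmv_lin t q a b u v i :
  expmv t q (fun j => a * u j + b * v j) i = a * expmv t q u i + b * expmv t q v i.
Proof.
apply: expmv_of_series.
move: (is_series_plus _ _ _ _ (is_series_scal_l a _ _ (expmv_is_series t q u i))
                               (is_series_scal_l b _ _ (expmv_is_series t q v i))).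
apply: is_series_ext => n.
by rewrite /exp_term matpowv_lin /plus /scal /= /mult /=; ring.
Qed.

Lemma expmv_const t q c i : is_Qmatrix q -> expmv t q (fun _ => c) i = c.
Proof.
move=> Qq; apply: expmv_of_partial_sums; elim=> [|N IH].
  by rewrite /= /exp_term matpowv_const //= /Rdiv Rinv_1; ring.
by rewrite tech5 IH /exp_term matpowv_const //; ring.
Qed.

Lemma expmv_0 q v i : expmv 0 q v i = v i.
Proof.
apply: expmv_of_partial_sums; elim=> [|N IH].
  by rewrite /exp_term /= /Rdiv Rinv_1 !Rmult_1_l.
by rewrite tech5 IH /exp_term pow_ne_zero // /Rdiv !Rmult_0_l Rplus_0_r.
Qed.

(* The Cauchy product of the series of [e^{t qshift}] and [e^{-Kt}] is, by the
   binomial expansion of [q = qshift q - K], the series of [e^{tq}]. *)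
Lemma expmv_qshift t q w i :
  expmv t q w i = expmv t (qshift q) w i * exp (- matnorm q * t).
Proof.
set K := matnorm q; set b := fun m => (- K * t) ^ m / INR (Factorial.fact m).
have b_abs : ex_series (fun n => Rabs (b n)).
  apply: ex_series_ext (ex_intro _ _ (is_series_exp_coef (Rabs (- K * t)))) => n.
  rewrite /b /Rdiv (Rabs_mult ((- K * t) ^ n)) -RPow_abs Rabs_inv (Rabs_pos_eq (INR _)) //.
  exact: pos_INR.
apply: expmv_of_series.
apply: is_series_ext (is_series_mult _ _ _ _ (expmv_is_series t (qshift q) w i)
          (is_series_exp_coef (- K * t)) (ex_series_abs_exp_term t (qshift q) w i) b_abs) => n.
rewrite /exp_term matpowv_binomial sum_f_R0_big -sumR_scal; apply: eq_bigr => -[k /=].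
rewrite ltnS minusE -/K => kn _.
have fact_split : INR (Factorial.fact n) =
                  INR 'C(n, k) * INR (Factorial.fact k) * INR (Factorial.fact (n - k)).
  by rewrite !fact_factorial -(bin_fact kn) -!multE !mult_INR; ring.
have pow_split : t ^ n = t ^ k * t ^ (n - k) by rewrite -pow_add plusE subnKC.
have binom_neq0 : INR 'C(n, k) <> 0.
  by apply: not_0_INR; apply/eqP; rewrite -lt0n bin_gt0.
rewrite fact_split pow_split Rpow_mult_distr; field.
by split; [|split]; try apply: INR_fact_neq0.
Qed.

Lemma expmv_ge0 t q w i : is_Qmatrix q -> 0 <= t -> (forall j, 0 <= w j) ->
  0 <= expmv t q w i.
Proof.
move=> Qq t_ge0 w_ge0; rewrite expmv_qshift.
apply: Rmult_le_pos (Rlt_le _ _ (exp_pos _)).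
apply: is_series_ge0 (expmv_is_series _ _ _ _) => n.
apply: Rmult_le_pos; last by apply: matpowv_ge0 => // i' j'; apply: qshift_ge0.
by apply: Rmult_le_pos; [apply: pow_le | apply/Rlt_le/Rinv_0_lt_compat/INR_fact_gt0].
Qed.

Lemma expmv_continuity q v i s : continuity_pt (fun s => expmv s q v i) s.
Proof.
pose c n := matpowv q n v i / INR (Factorial.fact n).
have -> : (fun s => expmv s q v i) = PSeries c.
  apply: functional_extensionality => x; symmetry; apply: is_series_unique.
  apply: is_series_ext (expmv_is_series x q v i) => n.
  by rewrite /exp_term /c /Rdiv /=; ring.
apply: PSeries_continuity.
apply: (Rbar_lt_le_trans _ (Rabs s + 1)); first by rewrite /=; lra.
apply: (proj1 (Lub_Rbar_correct (CV_disk c))).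
apply: ex_series_ext (ex_series_abs_exp_term (Rabs s + 1) q v i) => n.
by rewrite /exp_term /c /Rdiv; congr Rabs; ring.
Qed.

Lemma expmv_mono t q u v i : is_Qmatrix q -> 0 <= t -> (forall j, u j <= v j) ->
  expmv t q u i <= expmv t q v i.
Proof.
move=> Qq t_ge0 uv.
have vu_ge0 : forall j, 0 <= 1 * v j + (-1) * u j by move=> j; have := uv j; lra.
by have := expmv_ge0 t q _ i Qq t_ge0 vu_ge0; rewrite expmv_lin; lra.
Qed.

End MatrixExponential.

Lemma Rint_RiemannInt g a b (pr : Riemann_integrable g a b) : Rint g a b = RiemannInt pr.
Proof.
have : exists I, exists pr' : Riemann_integrable g a b, RiemannInt pr' = I.
  by exists (RiemannInt pr), pr.
by move=> /(epsilon_spec (inhabits 0)) [pr' pr'_eq]; rewrite /Rint -pr'_eq; apply: RiemannInt_P5.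
Qed.

Lemma Rint_same g a : Rint g a a = 0.
Proof. by rewrite (Rint_RiemannInt _ _ _ (RiemannInt_P7 g a)) RiemannInt_P9. Qed.

Lemma Rint_nonpos g a b : a <= b -> (forall x, a <= x <= b -> continuity_pt g x) ->
  (forall x, a <= x <= b -> g x <= 0) -> Rint g a b <= 0.
Proof.
move=> ab g_cont g_nonpos.
rewrite (Rint_RiemannInt _ _ _ (continuity_implies_RiemannInt ab g_cont)).
have pr0 : Riemann_integrable (fun _ => 0) a b.
  by apply: continuity_implies_RiemannInt => // x _; apply: continuity_pt_const.
apply: Rle_trans (RiemannInt_P19 _ pr0 ab _) _ => [x x_ab|].
  by apply: g_nonpos; lra.
by rewrite RiemannInt_const; lra.
Qed.

Section SolutionOperator.
Context {d : nat} (f : mat d -> vec d).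
Implicit Types (q : mat d) (u v : vec d).

Lemma Sq_0 q u i : Sq f q 0 u i = u i.
Proof. by rewrite /Sq expmv_0 Rint_same Rplus_0_r. Qed.

Lemma Sq_mono q h u v i : is_Qmatrix q -> 0 <= h -> (forall j, u j <= v j) ->
  Sq f q h u i <= Sq f q h v i.
Proof. by move=> Qq h_ge0 uv; rewrite /Sq; have := expmv_mono h q u v i Qq h_ge0 uv; lra. Qed.

Lemma Sq_add_const q h u c i : is_Qmatrix q ->
  Sq f q h (fun j => u j + c) i = Sq f q h u i + c.
Proof.
move=> Qq; rewrite /Sq.
have -> : (fun j => u j + c) = (fun j => 1 * u j + c * (fun _ => 1) j).
  by apply: functional_extensionality => j; ring.
by rewrite expmv_lin expmv_const //; ring.
Qed.

Lemma Sq_le_const q h u c i : is_Qmatrix q -> (forall j, f q j <= 0) -> 0 <= h ->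
  (forall j, u j <= c) -> Sq f q h u i <= c.
Proof.
move=> Qq fq_nonpos h_ge0 u_le.
apply: (Rle_trans _ (Sq f q h (fun j => 0 + c) i)).
  by apply: Sq_mono => // j; have := u_le j; lra.
rewrite Sq_add_const // /Sq expmv_const //.
suff : Rint (fun s => expmv s q (f q) i) 0 h <= 0 by lra.
apply: Rint_nonpos => // [s _|s [s_ge0 _]]; first exact: expmv_continuity.
by rewrite -(expmv_const s q 0 i Qq); apply: expmv_mono.
Qed.

End SolutionOperator.

Lemma supR_lub (E : R -> Prop) : bound E -> (exists x, E x) -> is_lub E (supR E).
Proof.
move=> E_bound [x Ex]; have [m Em] := completeness E E_bound (ex_intro _ x Ex).
by apply: epsilon_spec; exists m.
Qed.

Section NisioSemigroup.
Context {d : nat} (P : mat d -> Prop) (f : mat d -> vec d) (q0 : mat d).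
Hypothesis P_Qmatrix : forall q, P q -> is_Qmatrix q.
Hypothesis P_q0 : P q0.
Hypothesis f_nonpos : forall q j, P q -> f q j <= 0.
Implicit Types (u w : vec d).

Lemma Eh_lub h u i : 0 <= h -> is_lub (fun x => exists q, P q /\ x = Sq f q h u i) (Eh P f h u i).
Proof.
move=> h_ge0; apply: supR_lub; last by exists (Sq f q0 h u i), q0.
exists (nrm u) => _ [q [Pq ->]].
by apply: Sq_le_const => // [|j|j]; [exact: P_Qmatrix | exact: f_nonpos | exact: le_nrm].
Qed.

Lemma Sq_le_Eh q h u i : P q -> 0 <= h -> Sq f q h u i <= Eh P f h u i.
Proof. by move=> Pq h_ge0; apply: (proj1 (Eh_lub h u i h_ge0)); exists q. Qed.

Lemma Eh_le h u i c : 0 <= h -> (forall q, P q -> Sq f q h u i <= c) -> Eh P f h u i <= c.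
Proof.
by move=> h_ge0 Sq_le; apply: (proj2 (Eh_lub h u i h_ge0)) => _ [q [Pq ->]]; apply: Sq_le.
Qed.

Lemma Eh_0 u i : Eh P f 0 u i = u i.
Proof.
apply: Rle_antisym; first by apply: Eh_le => [|q _]; rewrite ?Sq_0; lra.
by rewrite -{1}(Sq_0 f q0 u i); apply: Sq_le_Eh => //; lra.
Qed.

Lemma Eh_le_const h u c i : 0 <= h -> (forall j, u j <= c) -> Eh P f h u i <= c.
Proof. by move=> h_ge0 u_le; apply: Eh_le => // q Pq; apply: Sq_le_const; auto. Qed.

Lemma Eh_approx h u i e : 0 <= h -> 0 < e -> exists q, P q /\ Eh P f h u i - e < Sq f q h u i.
Proof.
move=> h_ge0 e_gt0; apply: NNPP => no_q.
suff : Eh P f h u i <= Eh P f h u i - e by lra.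
apply: Eh_le => // q Pq; apply: Rnot_lt_le => lt; apply: no_q; by exists q.
Qed.

Lemma Eh_approx_Sbold h u e : 0 <= h -> 0 < e ->
  exists qs : 'I_d -> mat d, forall i, P (qs i) /\ Eh P f h u i - e < Sbold f qs h u i.
Proof.
move=> h_ge0 e_gt0.
exists (fun i => epsilon (inhabits q0) (fun q => P q /\ Eh P f h u i - e < Sq f q h u i)) => i.
exact: epsilon_spec (Eh_approx h u i e h_ge0 e_gt0).
Qed.

Lemma incr_from_le a ts t : incr_from a ts t -> a <= t.
Proof. by elim: ts a => [|x r IH] a /= => [->|[ax /IH]]; lra. Qed.

Lemma Epi_aux_le_const u0 c ts a t i : (forall j, u0 j <= c) -> incr_from a ts t ->
  Epi_aux P f a ts u0 i <= c.
Proof.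
move=> u0_le; elim: ts a i => [|x r IH] a i /=; first by move=> _; apply: u0_le.
by move=> [ax r_incr]; apply: Eh_le_const => [|j]; [lra | exact: IH r_incr].
Qed.

Lemma Epi_Epi_aux ts u0 i : Epi P f ts u0 i = Epi_aux P f 0 ts u0 i.
Proof. by case: ts => //=; rewrite Eh_0. Qed.

(* Zero-length steps of [theta] are dropped; the others become partition points. *)
Lemma Stheta_le_Epi_aux u0 t th a : all_in P t th ->
  exists ts, incr_from a ts (a + sum_h th) /\
             forall i, Stheta f th u0 i <= Epi_aux P f a ts u0 i.
Proof.
elim: th a => [|[qs h] r IH] a /=.
  by move=> _; exists nil; split=> [/=|i /=]; lra.
move=> [Pqs [[h_ge0 _] r_in]]; have [ts [ts_incr Stheta_le]] := IH (a + h) r_in.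
case: (Rle_lt_or_eq_dec 0 h h_ge0) => [h_gt0|h0]; last first.
  subst h; rewrite Rplus_0_r in ts_incr Stheta_le; rewrite Rplus_0_l.
  by exists ts; split=> // i; rewrite /= /Sbold Sq_0.
exists (cons (a + h) ts); split=> [|i /=]; first by split; [lra | rewrite -Rplus_assoc].
rewrite /Sbold (_ : a + h - a = h); last by ring.
apply: Rle_trans (Sq_le_Eh _ _ _ _ (Pqs i) h_ge0).
by apply: Sq_mono => //; apply: P_Qmatrix.
Qed.

(* Each step is chosen [e/2]-optimal; the remaining steps are [e/2]-approximated, and
   by monotonicity and [Sq_add_const] that error passes through unchanged. *)
Lemma Epi_aux_approx u0 t ts a e : 0 <= a -> incr_from a ts t -> 0 < e ->
  exists th, all_in P t th /\ sum_h th = t - a /\ length th = length ts /\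
             forall i, Epi_aux P f a ts u0 i - e <= Stheta f th u0 i.
Proof.
elim: ts a e => [|x r IH] a e a_ge0 /=.
  by move=> -> e_gt0; exists nil; split=> //=; split; [ring | split=> // i; lra].
move=> [ax r_incr] e_gt0; have xt := incr_from_le _ _ _ r_incr.
have [th [th_in [th_sum [th_len th_near]]]] := IH x (e / 2) ltac:(lra) r_incr ltac:(lra).
set w := Epi_aux P f x r u0.
have [qs qs_near] := Eh_approx_Sbold (x - a) w (e / 2) ltac:(lra) ltac:(lra).
exists (cons (qs, x - a) th); split.
  by split; [move=> i; case: (qs_near i) | split; [lra | exact: th_in]].
split; first by rewrite /= th_sum; ring.
split=> [|i]; first by rewrite /= th_len.
have [Pq Eh_near] := qs_near i; rewrite /Sbold in Eh_near; rewrite /= -/w.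
apply: Rle_trans (_ : Sq f (qs i) (x - a) (fun j => w j + - (e / 2)) i <= _).
  by rewrite Sq_add_const; [lra | apply: P_Qmatrix].
by apply: Sq_mono; [exact: P_Qmatrix | lra | move=> j /=; have := th_near j; rewrite -/w; lra].
Qed.

Lemma exists_Pt_ge_Stheta u0 t th i : in_Qt P t th ->
  exists ts, in_Pt t ts /\ Stheta f th u0 i <= Epi P f ts u0 i.
Proof.
move=> [_ [th_in th_sum]]; have [ts [ts_incr th_le]] := Stheta_le_Epi_aux u0 t th 0 th_in.
exists ts; split; last by rewrite Epi_Epi_aux.
by rewrite /in_Pt -th_sum -[sum_h th]Rplus_0_l.
Qed.

Lemma exists_Qt_near_Epi u0 t ts i e : in_Pt t ts -> 0 < e ->
  exists th, in_Qt P t th /\ Epi P f ts u0 i - e <= Stheta f th u0 i.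
Proof.
case: ts => [t0 e_gt0|x r ts_Pt e_gt0].
  have {}t0 : 0 = t := t0.
  exists (cons (fun _ => q0, 0) nil); split; last by rewrite /= /Sbold Sq_0 Eh_0; lra.
  by split=> //; split=> /=; [split=> //; lra | lra].
have [th [th_in [th_sum [th_len th_near]]]] :=
  Epi_aux_approx u0 t (cons x r) 0 e (Rle_refl 0) ts_Pt e_gt0.
exists th; split; last by rewrite Epi_Epi_aux.
split; first by case: th th_len {th_in th_sum th_near}.
by split=> //; rewrite th_sum Rminus_0_r.
Qed.

Lemma nisio_lub u0 t i : 0 <= t ->
  is_lub (fun x => exists ts, in_Pt t ts /\ x = Epi P f ts u0 i) (nisio P f t u0 i).
Proof.
move=> t_ge0; apply: supR_lub.
  exists (nrm u0) => _ [ts [ts_Pt ->]]; rewrite Epi_Epi_aux.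
  exact: Epi_aux_le_const (le_nrm u0) ts_Pt.
case: (Rle_lt_or_eq_dec 0 t t_ge0) => [t_gt0|t0].
  by exists (Epi P f (cons t nil) u0 i), (cons t nil).
by exists (Epi P f nil u0 i), nil.
Qed.

End NisioSemigroup.

Theorem mainTheorem15 (d : nat) (P : mat d -> Prop) (f : mat d -> vec d) (q0 : mat d)
  (HQ : forall q, P q -> is_Qmatrix q)
  (Hq0 : P q0)
  (Hf0 : forall i, f q0 i = 0)
  (Hsup : forall i, is_lub (fun x => exists q, P q /\ x = f q i) 0)
  (Hfin : forall (u : vec d) i, bound (fun x => exists q, P q /\ x = mulmv q u i + f q i))
  (t : R) (u0 : vec d) (ht : 0 <= t) :
  forall i,
    is_lub (fun x => exists ts, in_Pt t ts /\ x = Epi P f ts u0 i) (nisio P f t u0 i) /\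
    is_lub (fun x => exists th, in_Qt P t th /\ x = Stheta f th u0 i) (nisio P f t u0 i).
Proof.
move=> i.
have f_nonpos : forall q j, P q -> f q j <= 0.
  by move=> q j Pq; apply: (proj1 (Hsup j)); exists q.
have Pt_lub := nisio_lub P f q0 HQ Hq0 f_nonpos u0 t i ht.
split=> //; split.
  move=> _ [th [th_Qt ->]].
  have [ts [ts_Pt th_le]] := exists_Pt_ge_Stheta P f q0 HQ Hq0 f_nonpos u0 t th i th_Qt.
  by apply: Rle_trans th_le (proj1 Pt_lub _ _); exists ts.
move=> y y_ub; apply: (proj2 Pt_lub) => _ [ts [ts_Pt ->]].
apply: le_epsilon => e e_gt0.
have [th [th_Qt th_near]] := exists_Qt_near_Epi P f q0 HQ Hq0 f_nonpos u0 t ts i e ts_Pt e_gt0.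
have : Stheta f th u0 i <= y by apply: y_ub; exists th.
lra.
Qed.
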